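(* Let $\alpha,\beta,\gamma,\alpha',\gamma'\in\mathbb C$ and let $T_{n,k}=\left[\begin{array}{cc|c}\alpha,&\beta&\gamma\\ \alpha',&-\beta&\gamma'\end{array}\right]_{n,k}$ with row polynomials $G_n(t)$. Then for all $0\le k\le n$: (RT) $\left[\begin{array}{cc|c}\alpha'-\beta,&\beta&\gamma'\\ \alpha+\beta,&-\beta&\gamma\end{array}\right]_{n,k}=T_{n,n-k}$, equivalently the row polynomials of the left-hand triangle are $t^nG_n(1/t)$; (UBT) $\left[\begin{array}{cc|c}-\alpha-\alpha',&\beta&-\gamma-\gamma'\\ \alpha',&-\beta&\gamma'\end{array}\right]_{n,k}=(-1)^{n-k}\sum_{j=k}^n\binom jk T_{n,j}$, equivalently the row polynomials of the left-hand triangle are $(-1)^nG_n(1-t)$. In terms of EGFs, the RT triangle has EGF $G(1/t,tz)$ and the UBT triangle has EGF $G(1-t,-z)$, where $G$ is the EGF of $T$. The two transformations are involutions and generate a group of six transformations of GKP triangles with $\beta'=-\beta$ (preserving $\beta,\beta'$) isomorphic to the symmetric group $S_3$.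
   Context: GKP triangle: for complex parameters $\alpha,\beta,\gamma,\alpha',\beta',\gamma'$, the array $T_{n,k}=\left[\begin{array}{cc|c}\alpha,&\beta&\gamma\\ \alpha',&\beta'&\gamma'\end{array}\right]_{n,k}$ ($n,k\in\mathbb Z$) is defined by $T_{0,0}=1$, $T_{n,k}=0$ if $n<0$, $k<0$ or $k>n$, and $T_{n+1,k+1}=[\alpha n+\beta(k+1)+\gamma]\,T_{n,k+1}+[\alpha' n+\beta' k+\gamma']\,T_{n,k}$ for all $n\ge0$ and all integers $k$. Its $n$th row polynomial is $G_n(t)=\sum_{k=0}^n T_{n,k}t^k$ and its EGF is $G(t,z)=\sum_{n\ge0}G_n(t)\,z^n/n!$. *)

From mathcomp Require Import all_boot all_algebra complex.
From mathcomp Require Import Rstruct.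
Set Implicit Arguments. Unset Strict Implicit. Unset Printing Implicit Defensive.
Import GRing.Theory.
Local Open Scope ring_scope.

Definition C : fieldType := Rdefinitions.R[i].

(* Indices are natural numbers; entries with k > n are 0 automatically,
   and the recurrence at k = -1 reads T(n+1,0) = (a n + c) T(n,0)
   since T(n,-1) = 0. *)
Fixpoint gkp (R : comRingType) (a b c a' b' c' : R) (n k : nat) : R :=
  match n with
  | 0%N => if k == 0%N then 1 else 0
  | m.+1 =>
    match k with
    | 0%N => (a * m%:R + c) * gkp a b c a' b' c' m 0
    | j.+1 => (a * m%:R + b * j.+1%:R + c) * gkp a b c a' b' c' m j.+1
              + (a' * m%:R + b' * j%:R + c') * gkp a b c a' b' c' m j
    end
  end.

Definition gkp_row (R : comRingType) (a b c a' b' c' : R) (n : nat) : {poly R} :=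
  \sum_(k < n.+1) gkp a b c a' b' c' n k *: 'X^k.

Definition params := (C * C * C * C * C)%type.

Definition T_of (p : params) : nat -> nat -> C :=
  let: (a, b, c, a', c') := p in gkp a b c a' (- b) c'.

Definition G_of (p : params) : nat -> {poly C} :=
  let: (a, b, c, a', c') := p in gkp_row a b c a' (- b) c'.

Definition RT (p : params) : params :=
  let: (a, b, c, a', c') := p in (a' - b, b, c', a + b, c).

Definition UBT (p : params) : params :=
  let: (a, b, c, a', c') := p in (- a - a', b, - c - c', a', c').

From mathcomp Require Import all_boot all_algebra complex.
From mathcomp Require Import ring.
Import GRing.Theory.
Local Open Scope ring_scope.

(* Reading the recurrence from right to left shows that the reflected array
   T(n, n-k) is again a GKP triangle, with parameters swapped as in (RT).
   For (UBT), the rows satisfy the differential recurrence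
   G_{n+1} = ((a n + c) + (a' n + c') t) G_n + (b t + b' t^2) G_n'.
   When b' = -b the operator b t (1 - t) d/dt only changes sign under
   t |-> 1 - t, so (-1)^n G_n(1 - t) satisfies the recurrence with the UBT
   parameters; the entrywise form is read off from the binomial expansion of
   (1 - t)^j. *)

Lemma gkp_eq0 (R : comNzRingType) (a b c a' b' c' : R) n k :
  (n < k)%N -> gkp a b c a' b' c' n k = 0.
Proof.
elim: n k => [|n IHn] [|k] //= lt_nk.
by rewrite !IHn ?mulr0 ?addr0 // ltnW.
Qed.

Section GKPRows.
Variables (R : comNzRingType) (a b c a' b' c' : R).
Local Notation T := (gkp a b c a' b' c').
Local Notation G := (gkp_row a b c a' b' c').

Lemma coef_gkp_row n k : (G n)`_k = T n k.
Proof.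
rewrite /gkp_row coef_sum.
under eq_bigr => i _ do rewrite coefZ coefXn.
have [lt_nk | le_kn] := ltnP n k.
  rewrite gkp_eq0 // big1 // => i _.
  by rewrite gtn_eqF ?mulr0 // (leq_trans (ltn_ord i)).
rewrite (bigD1 (Ordinal (le_kn : (k < n.+1)%N))) //= eqxx mulr1.
rewrite big1 ?addr0 // => i.
by rewrite eq_sym -val_eqE /= => /negbTE->; rewrite mulr0.
Qed.

Lemma gkp_rowS n :
  G n.+1 = ((a * n%:R + c)%:P + (a' * n%:R + c')%:P * 'X) * G n
           + (b%:P * 'X + b'%:P * 'X ^+ 2) * (G n)^`().
Proof.
apply/polyP => k.
rewrite expr2 !mulrDl !coefD -!mulrA !coefCM !coefXM coef_gkp_row.
by case: k => [|[|k]] /=; rewrite ?coef_deriv !coef_gkp_row; ring.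
Qed.

Lemma gkp_reflect n k : (k <= n)%N ->
  gkp (a' + b') (- b') c' (a + b) (- b) c n k = T n (n - k).
Proof.
elim: n k => [|n IHn] [|k] //= le_kn.
  by rewrite IHn // subn0 [T n n.+1]gkp_eq0 //; ring.
move: le_kn; rewrite ltnS leq_eqVlt => /orP[/eqP-> | lt_kn].
  by rewrite subnn [gkp _ _ _ _ _ _ n n.+1]gkp_eq0 // IHn // subnn /=; ring.
rewrite (IHn k.+1) // (IHn k (ltnW lt_kn)) subSS -(subnSK lt_kn) /=.
have -> : n%:R = (n - k.+1)%:R + k.+1%:R :> R by rewrite -natrD subnK.
ring.
Qed.

End GKPRows.

Lemma horner_gkp_row_reflect (F : fieldType) (a b c a' b' c' : F) n t :
  t != 0 ->
  (gkp_row (a' + b') (- b') c' (a + b) (- b) c n).[t] =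
  t ^+ n * (gkp_row a b c a' b' c' n).[t^-1].
Proof.
move=> t_neq0; rewrite /gkp_row !horner_sum mulr_sumr.
rewrite (reindex_inj rev_ord_inj) /=; apply: eq_bigr => i _.
rewrite !hornerZ !hornerXn subSS gkp_reflect ?leq_subr //.
have -> : t ^+ n = t ^+ (n - i) * t ^+ i by rewrite -exprD subnK ?leq_ord.
by rewrite subKn ?leq_ord // exprVn mulrCA -mulrA mulfV ?expf_neq0 // mulr1.
Qed.

Lemma coef_1subX_exp (R : comNzRingType) j k :
  ((1 - 'X : {poly R}) ^+ j)`_k = (-1) ^+ k * 'C(j, k)%:R.
Proof.
elim: j k => [|j IHj] [|k]; rewrite ?expr0 ?coef1 ?mulr1 ?mulr0 //.
  by rewrite exprSr mulrBr mulr1 coefB coefMX /= IHj expr0 bin0 subr0 mulr1.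
by rewrite exprSr mulrBr mulr1 coefB coefMX /= !IHj binS natrD exprS; ring.
Qed.

Section UnitBinomialTransform.
Variables (R : comNzRingType) (a b c a' c' : R).
Local Notation T := (gkp a b c a' (- b) c').
Local Notation G := (gkp_row a b c a' (- b) c').

Lemma gkp_row_UBT n :
  gkp_row (- a - a') b (- c - c') a' (- b) c' n =
  (-1) ^+ n *: (G n \Po (1 - 'X)).
Proof.
elim: n => [|n IHn].
  by rewrite /gkp_row !big_ord1 /= expr0 !scale1r comp_polyC.
rewrite !gkp_rowS IHn derivZ deriv_comp derivB derivX -polyC1 derivC sub0r.
rewrite !(comp_polyD, comp_polyM, comp_polyX, comp_polyC, comp_Xn_poly).
rewrite -!mul_polyC !(polyCD, polyCM, polyCN, polyCB, polyC_natr, polyC_exp).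
by rewrite [(-1) ^+ n.+1]exprS polyC1; ring.
Qed.

Lemma gkp_UBT n k : (k <= n)%N ->
  gkp (- a - a') b (- c - c') a' (- b) c' n k =
  (-1) ^+ (n - k) * \sum_(k <= j < n.+1) 'C(j, k)%:R * T n j.
Proof.
move=> le_kn.
rewrite -coef_gkp_row gkp_row_UBT coefZ /gkp_row linear_sum coef_sum.
under eq_bigr => i _ do rewrite linearZ /= comp_Xn_poly coefZ coef_1subX_exp.
have sign_n : (-1) ^+ n = (-1) ^+ (n - k) * (-1) ^+ k :> R.
  by rewrite -exprD subnK.
rewrite (big_nat_widenl _ 0) // big_mkcond big_mkord !mulr_sumr.
apply: eq_bigr => i _; case: leqP => [_ | lt_ik].
  transitivity ((-1) ^+ (n - k) * (-1) ^+ k ^+ 2 * ('C(i, k)%:R * T n i)).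
    by rewrite sign_n; ring.
  by rewrite sqrr_sign mulr1.
by rewrite bin_small // !(mul0r, mulr0).
Qed.

End UnitBinomialTransform.

Theorem mainTheorem3 :
  (forall (p : params) (n k : nat), (k <= n)%N ->
     T_of (RT p) n k = T_of p n (n - k)) /\
  (forall (p : params) (n : nat) (t : C), t != 0 ->
     (G_of (RT p) n).[t] = t ^+ n * (G_of p n).[t^-1]) /\
  (forall (p : params) (n k : nat), (k <= n)%N ->
     T_of (UBT p) n k =
       (-1) ^+ (n - k) * \sum_(k <= j < n.+1) 'C(j, k)%:R * T_of p n j) /\
  (forall (p : params) (n : nat),
     G_of (UBT p) n = (-1) ^+ n *: (G_of p n \Po (1 - 'X))) /\
  (forall p : params, RT (RT p) = p) /\
  (forall p : params, UBT (UBT p) = p) /\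
  (forall p : params, RT (UBT (RT (UBT (RT (UBT p))))) = p) /\
  (exists p : params, RT (UBT p) <> p) /\
  (exists p : params, RT p <> UBT p).
Proof.
split; first move=> [[[[a b] c] a'] c'] n k le_kn /=.
  by have := @gkp_reflect _ a b c a' (- b) c' n k le_kn; rewrite opprK.
split; first move=> [[[[a b] c] a'] c'] n t t_neq0 /=.
  have := @horner_gkp_row_reflect _ a b c a' (- b) c' n t t_neq0.
  by rewrite opprK.
split; first by move=> [[[[a b] c] a'] c'] n k; apply: gkp_UBT.
split; first by move=> [[[[a b] c] a'] c'] n; apply: gkp_row_UBT.
do 3 (split; first by move=> [[[[a b] c] a'] c'] /=; congr (_, _, _, _, _); ring).
split.
  by exists (0, 0, 0, 1, 0) => /(congr1 (fun p : params => p.1.1.1.1))/eqP;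
     rewrite /= subr0 oner_eq0.
by exists (0, 0, 0, 1, 0) => /(congr1 (fun p : params => p.1.2))/eqP;
   rewrite /= addr0 eq_sym oner_eq0.
Qed.
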